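(* Let $\tau\subset\mathbb{Z}^4_{\ge0}$ be a B-facet which has a $1$-dimensional V-face $F$ that is not a B-face. Then $\tau$ is a $B_1$-facet, or a $B_2$-facet, or a flat border.
   Context: A polytope is a finite subset of $\mathbb{Z}^n$; its dimension is the dimension of its affine span; a face of a finite set $S$ is $S\cap G$ for a face $G$ of the convex hull of $S$. A $k$-simplex is a set of $k+1$ affinely independent points; a $k$-simplex $S\subset\mathbb{Z}^m_{\ge0}$ is a B-simplex if there is an index $i$ with exactly $k$ vertices in $\{x_i=0\}$ and the remaining vertex having $x_i=1$. A B-facet in $\mathbb{Z}^n_{\ge0}$ is a finite set $\tau\subset\mathbb{Z}^n_{\ge0}$ whose affine span is a hyperplane $\{\langle a,x\rangle=b\}$ with all $a_j>0$, such that every $(n-1)$-simplex with vertices in $\tau$ is a B-simplex. A face $F$ of $\tau$ is a V-face if it is contained in a coordinate subspace $E$ (linear span of some standard basis vectors) with $\dim E=\dim F+1$; such $F$ is a B-face if every $(\dim F)$-simplex with vertices in $F$ is a B-simplex when regarded as a subset of $\mathbb{Z}^{E}_{\ge0}\cong\mathbb{Z}^{\dim E}_{\ge0}$ (using only the coordinates of $E$). For $\tau\subset\mathbb{Z}^4_{\ge0}$: $\tau$ is a $B_1$-facet if for some $i$ exactly one point has nonzero $x_i$, with $x_i=1$; a $B_2$-facet if for some distinct $i,j$ all $x\in\tau$ have $(x_i,x_j)\in\{(0,0),(1,0),(0,1)\}$; a flat border if there are distinct $i,j$ and $C\in\tau$ with $C_i=C_j=1$ such that $\tau$ contains at least two distinct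 points with $x_i=x_j=0$ and every point of $\tau$ other than $C$ lies in $\{x_i=0\}\cup\{x_j=0\}$. *)

From HB Require Import structures.
From mathcomp Require Import all_boot all_order all_algebra.
From mathcomp Require Export finmap.
Set Implicit Arguments. Unset Strict Implicit. Unset Printing Implicit Defensive.
Import Order.TTheory GRing.Theory Num.Theory.
Local Open Scope fset_scope.
Local Open Scope ring_scope.

Definition pt (n : nat) := n.-tuple nat.

Definition vec n (x : pt n) : 'rV[rat]_n := \row_i ((tnth x i)%:R).

Definition pt0 n : pt n := nseq_tuple n 0%N.

(* Dimension of the affine span of a (nonempty) finite set S:
   dim span { s - s0 : s in S } for a fixed s0 in S. *)
Definition adim n (S : {fset pt n}) : nat :=
  let l := enum_fset S in
  \rank (\matrix_(i < size l) (vec (nth (pt0 n) l i) - vec (head (pt0 n) l))).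

Definition simplex n (k : nat) (S : {fset pt n}) : Prop :=
  #|` S| = k.+1 /\ adim S = k.

Definition in_aff n (S : {fset pt n}) (y : 'rV[rat]_n) : Prop :=
  exists c : pt n -> rat,
    \sum_(s <- enum_fset S) c s = 1 /\ \sum_(s <- enum_fset S) c s *: vec s = y.

(* B-simplex, where the distinguished index i is taken in the coordinate set J
   (J = all coordinates for simplices in Z^n; J = E for simplices in Z^E). *)
Definition Bsimplex_on n (J : {set 'I_n}) (S : {fset pt n}) : Prop :=
  exists2 i, i \in J &
    (#|` [fset x in S | tnth x i == 0%N]|).+1 = #|` S| /\
    (forall x, x \in S -> tnth x i != 0%N -> tnth x i = 1%N).

Definition Bsimplex n (S : {fset pt n}) : Prop := Bsimplex_on setT S.

Definition Bfacet n (tau : {fset pt n}) : Prop :=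
  (exists (a : 'I_n -> rat) (b : rat),
      (forall j, 0 < a j) /\
      (forall y : 'rV[rat]_n, in_aff tau y <-> \sum_j a j * y 0 j = b)) /\
  (forall S : {fset pt n}, S `<=` tau -> simplex n.-1 S -> Bsimplex S).

(* Faces of a finite set S: S ∩ G for G a face of conv S, i.e. the points of S
   on a supporting hyperplane (c = 0 allowed; it gives S itself or the empty set). *)
Definition face n (S F : {fset pt n}) : Prop :=
  exists (c : 'I_n -> rat) (m : rat),
    (forall s, s \in S -> \sum_j c j * (vec s) 0 j <= m) /\
    F = [fset s in S | \sum_j c j * (vec s) 0 j == m].

Definition in_coord_subspace n (J : {set 'I_n}) (F : {fset pt n}) : Prop :=
  forall x, x \in F -> forall j, j \notin J -> tnth x j = 0%N.

Definition Vface_wrt n (tau F : {fset pt n}) (J : {set 'I_n}) : Prop :=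
  face tau F /\ in_coord_subspace J F /\ #|J| = (adim F).+1.

Definition Bface_wrt n (F : {fset pt n}) (J : {set 'I_n}) : Prop :=
  forall S : {fset pt n}, S `<=` F -> simplex (adim F) S -> Bsimplex_on J S.

Definition B1facet (tau : {fset pt 4}) : Prop :=
  exists i : 'I_4,
    #|` [fset x in tau | tnth x i != 0%N]| = 1%N /\
    (forall x, x \in tau -> tnth x i != 0%N -> tnth x i = 1%N).

Definition B2facet (tau : {fset pt 4}) : Prop :=
  exists i j : 'I_4, i != j /\
    forall x, x \in tau ->
      (tnth x i, tnth x j) \in [:: (0, 0); (1, 0); (0, 1)]%N.

Definition flat_border (tau : {fset pt 4}) : Prop :=
  exists (i j : 'I_4) (C : pt 4), i != j /\ C \in tau /\
    tnth C i = 1%N /\ tnth C j = 1%N /\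
    (2 <= #|` [fset x in tau | (tnth x i == 0%N) && (tnth x j == 0%N)]|)%N /\
    (forall x, x \in tau -> x != C -> tnth x i = 0%N \/ tnth x j = 0%N).

From mathcomp Require Import all_boot all_order all_algebra finmap.
From mathcomp Require Import zify ring lra.
From Stdlib Require Import Classical.
Set Implicit Arguments. Unset Strict Implicit. Unset Printing Implicit Defensive.
Import Order.TTheory GRing.Theory Num.Theory.
Local Open Scope fset_scope.

(* Let tau lie on the hyperplane <a, x> = b (all a_m > 0), let {i, j} be the
   coordinates of the plane of the V-face and {k, l} the two others, and let P, Q be
   an edge of the V-face that is B neither in direction i nor in direction j.  Two
   points of tau agreeing in k and l satisfy a_i dx_i = - a_j dx_j, so P_i <> Q_i and
   P_j <> Q_j; consequently every 3-simplex {P, Q, R, T} of tau is B in direction k or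
   l, i.e. (R_k, T_k) or (R_l, T_l) is (1, 0) or (0, 1).  Symmetrically, a 3-simplex
   containing an edge Y Y' of tau along which only x_i and x_j vary can only be B in
   direction i or j, so such an edge exchanges exactly one unit between x_i and x_j.
   A case analysis of the (k, l)-parts of the points of tau with these two rules
   produces a B1-facet, a B2-facet in the directions k, l, or a flat border. *)


Lemma mem_uniq_ord4 (i j k l m : 'I_4) : uniq [:: i; j; k; l] -> m \in [:: i; j; k; l].
Proof.
move=> U; have /subset_cardP : #|[:: i; j; k; l]| = #|'I_4|.
  by move/card_uniqP: U ->; rewrite card_ord.
by move/(_ (subset_predT _))->.
Qed.

Lemma uniq_ord4_complete (i j : 'I_4) : i != j -> exists k l : 'I_4, uniq [:: i; j; k; l].
Proof.
case: i j => [[|[|[|[|?]]]] Hi] [[|[|[|[|?]]]] Hj] // _;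
first [ by exists (@Ordinal 4 0 isT), (@Ordinal 4 1 isT)
      | by exists (@Ordinal 4 0 isT), (@Ordinal 4 2 isT)
      | by exists (@Ordinal 4 0 isT), (@Ordinal 4 3 isT)
      | by exists (@Ordinal 4 1 isT), (@Ordinal 4 2 isT)
      | by exists (@Ordinal 4 1 isT), (@Ordinal 4 3 isT)
      | by exists (@Ordinal 4 2 isT), (@Ordinal 4 3 isT) ].
Qed.

Lemma uniq_ord4P (i j k l : 'I_4) : uniq [:: i; j; k; l] ->
  i != j /\ i != k /\ i != l /\ j != k /\ j != l /\ k != l.
Proof. by rewrite /= !inE !negb_or => /and4P[/and3P[-> -> ->] /andP[-> ->] -> _]. Qed.

Lemma big_uniq_ord4 (R : nmodType) (f : 'I_4 -> R) (i j k l : 'I_4) :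
  uniq [:: i; j; k; l] -> (\sum_m f m = f i + f j + f k + f l)%R.
Proof.
move=> U; have P : perm_eq (index_enum 'I_4) [:: i; j; k; l].
  apply: uniq_perm => //; first exact: index_enum_uniq.
  by move=> m; rewrite mem_index_enum mem_uniq_ord4.
by rewrite (perm_big _ P) /= !big_cons big_nil addr0 !addrA.
Qed.

Lemma eq_pt4 (i j k l : 'I_4) (X Y : pt 4) : uniq [:: i; j; k; l] ->
  tnth X i = tnth Y i -> tnth X j = tnth Y j -> tnth X k = tnth Y k ->
  tnth X l = tnth Y l -> X = Y.
Proof.
move=> U h1 h2 h3 h4; apply: eq_from_tnth => m.
by have := mem_uniq_ord4 m U; rewrite !inE => /or4P[] /eqP ->.
Qed.

Local Open Scope ring_scope.

Definition qcoord n (x : pt n) (m : 'I_n) : rat := (tnth x m)%:R.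

Definition lform n (g : 'I_n -> rat) (x : pt n) : rat := \sum_m g m * qcoord x m.

Lemma qcoord_inj n (x y : pt n) m : qcoord x m = qcoord y m -> tnth x m = tnth y m.
Proof. by move/eqP; rewrite eqr_nat => /eqP. Qed.

Lemma lform_vec n (g : 'I_n -> rat) (x : pt n) : \sum_m g m * vec x 0 m = lform g x.
Proof. by apply: eq_bigr => m _; rewrite mxE. Qed.

Lemma lformB n (g h : 'I_n -> rat) c (x : pt n) :
  lform (fun m => g m - c * h m) x = lform g x - c * lform h x.
Proof.
rewrite /lform mulr_sumr -sumrB; apply: eq_bigr => m _.
by rewrite mulrBl mulrA.
Qed.

Lemma lform4 (g : 'I_4 -> rat) (x : pt 4) i j k l : uniq [:: i; j; k; l] ->
  lform g x = g i * qcoord x i + g j * qcoord x j + g k * qcoord x k + g l * qcoord x l.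
Proof. exact: big_uniq_ord4. Qed.

Lemma in_aff_vec n (S : {fset pt n}) X : X \in S -> in_aff S (vec X).
Proof.
move=> HX; exists (fun s => if s == X then 1 else 0); split.
  rewrite (bigD1_seq X) ?fset_uniq //= ?eqxx.
  by rewrite big1 ?addr0 // => s /negbTE ->.
rewrite (bigD1_seq X) ?fset_uniq //= ?eqxx.
by rewrite big1 ?addr0 ?scale1r // => s /negbTE ->; rewrite scale0r.
Qed.

Lemma in_aff_lform n (S : {fset pt n}) (g : 'I_n -> rat) e y :
  (forall X, X \in S -> lform g X = e) -> in_aff S y -> \sum_m g m * y 0 m = e.
Proof.
move=> Hg [c [Hc1 Hcy]]; rewrite -Hcy.
under eq_bigr do rewrite summxE mulr_sumr.
rewrite exchange_big /= -[RHS]mul1r -Hc1 mulr_suml.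
apply: eq_big_seq => s Hs.
rewrite -(Hg s Hs) mulr_sumr; apply: eq_bigr => m _.
by rewrite !mxE mulrCA.
Qed.

Section Hyperplane.

Variables (n : nat) (tau : {fset pt n}) (a : 'I_n -> rat) (b : rat).
Hypothesis a_pos : forall j, 0 < a j.
Hypothesis aff_tau : forall y : 'rV[rat]_n, in_aff tau y <-> \sum_j a j * y 0 j = b.

Lemma hyperplane_mem X : X \in tau -> lform a X = b.
Proof. by move=> HX; rewrite -lform_vec; apply/aff_tau/in_aff_vec. Qed.

(* Test the constant functional against the point (b / a m) e_m of the hyperplane. *)
Lemma hyperplane_lform_const (g : 'I_n -> rat) e :
  (forall X, X \in tau -> lform g X = e) -> forall m, g m * b = e * a m.
Proof.
move=> Hg m0; have am0 : a m0 != 0 by rewrite gt_eqF.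
pose y : 'rV[rat]_n := \row_j (if j == m0 then b / a m0 else 0).
have Hy (f : 'I_n -> rat) : \sum_j f j * y 0 j = f m0 * (b / a m0).
  rewrite (bigD1 m0) //= big1 ?addr0; first by rewrite mxE eqxx.
  by move=> j /negbTE hj; rewrite mxE hj mulr0.
have /aff_tau : \sum_j a j * y 0 j = b by rewrite Hy mulrC mulfVK.
by move/(in_aff_lform Hg); rewrite Hy => <-; rewrite mulrA mulfVK.
Qed.

End Hyperplane.

(* The row a spans the kernel of M^T, where M lists the differences s - s0 for s in S,
   so rank M = n. *)
Lemma adim_hyperplane n (S : {fset pt n.+1}) (a : 'I_n.+1 -> rat) b j0 :
  a j0 != 0 -> (0 < #|` S|)%N -> (forall X, X \in S -> lform a X = b) ->
  (forall g : 'I_n.+1 -> rat, (forall X Y, X \in S -> Y \in S -> lform g X = lform g Y) ->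
      exists c, forall m, g m = c * a m) ->
  adim S = n.
Proof.
move=> a0 HS0 Hh Hg; rewrite /adim.
set l := enum_fset S; set M := \matrix_(i < size l) _.
have Hhead : head (pt0 n.+1) l \in S by rewrite -nth0; apply: mem_nth.
have HnthS (t : 'I_(size l)) : nth (pt0 n.+1) l t \in S by apply: mem_nth.
pose A : 'rV[rat]_n.+1 := \row_j a j.
have Hker : \rank (kermx M^T) = (n.+1 - \rank M)%N by rewrite mxrank_ker mxrank_tr.
have sub_A_ker : (A <= kermx M^T)%MS.
  apply/sub_kermxP; apply/rowP => t; rewrite !mxE.
  under eq_bigr do rewrite !mxE.
  rewrite -[RHS](subrr b) -{1}(Hh _ (HnthS t)) -(Hh _ Hhead) -sumrB.
  by apply: eq_bigr => j _; rewrite mulrBr.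
have rankA : \rank A = 1%N.
  apply/eqP; rewrite eqn_leq rank_leq_row lt0n mxrank_eq0.
  by apply: contra a0 => /eqP/rowP/(_ j0); rewrite !mxE => ->.
have sub_ker_A : (kermx M^T <= A)%MS.
  apply/row_subP => r; set v := row r _.
  have Hv : v *m M^T = 0 by rewrite /v -row_mul mulmx_ker row0.
  have Hc (t : 'I_(size l)) :
      lform (v ord0) (nth (pt0 n.+1) l t) = lform (v ord0) (head (pt0 n.+1) l).
    apply/eqP; rewrite -subr_eq0 -sumrB; apply/eqP.
    have := congr1 (fun B : 'M[rat]_(1, size l) => B ord0 t) Hv.
    rewrite /= !mxE => E; rewrite -[RHS]E.
    by apply: eq_bigr => j _; rewrite !mxE mulrBr.
  have [c Hcv] : exists c, forall m, v ord0 m = c * a m.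
    apply: Hg => X Y HX HY.
    have HXl : (index X l < size l)%N by rewrite index_mem.
    have HYl : (index Y l < size l)%N by rewrite index_mem.
    by have := Hc (Ordinal HXl); have := Hc (Ordinal HYl); rewrite /= !nth_index // => -> ->.
  have -> : v = c *: A by apply/rowP => j; rewrite [LHS]Hcv !mxE.
  exact: scalemx_sub.
have := mxrankS sub_A_ker; have := mxrankS sub_ker_A; rewrite Hker rankA.
have := rank_leq_col M; lia.
Qed.

Lemma lform_pos_eq0 n (a : 'I_n -> rat) (X : pt n) :
  (forall m, 0 < a m) -> lform a X = 0 -> forall m, tnth X m = 0%N.
Proof.
move=> a_pos /eqP; rewrite psumr_eq0 => [/allP X0 m | m _]; last by rewrite mulr_ge0 // ltW.
move: (X0 m (mem_index_enum m)); rewrite implyTb mulf_eq0 gt_eqF //=.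
by rewrite /qcoord pnatr_eq0 => /eqP.
Qed.

Lemma hyperplane_rhs_neq0 n (a : 'I_n -> rat) b (X Y : pt n) :
  (forall m, 0 < a m) -> lform a X = b -> lform a Y = b -> X != Y -> b != 0.
Proof.
move=> a_pos aX aY; apply: contraNneq => b0; apply/eqP/eq_from_tnth => m.
by rewrite (lform_pos_eq0 a_pos (etrans aX b0)) (lform_pos_eq0 a_pos (etrans aY b0)).
Qed.

Lemma hyperplane_kl_independent n (tau : {fset pt n}) (a : 'I_n -> rat) b (k l : 'I_n) :
  (forall m, 0 < a m) -> (forall y, in_aff tau y <-> \sum_j a j * y 0 j = b) ->
  b != 0 -> k != l ->
  exists R T : pt n, [/\ R \in tau, T \in tau & (tnth R k * tnth T l != tnth R l * tnth T k)%N].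
Proof.
move=> a_pos aff b0 kl.
have const0 (g : 'I_n -> rat) : (forall X, X \in tau -> lform g X = 0) -> forall m, g m = 0.
  move=> Hg m; apply/eqP; have := hyperplane_lform_const a_pos aff Hg m.
  by rewrite mul0r => /eqP; rewrite mulf_eq0 (negbTE b0) orbF.
have [R HR Rk] : exists2 R : pt n, R \in tau & tnth R k != 0%N.
  apply: NNPP => noR.
  suff /eqP : (k == k)%:R = 0 :> rat by rewrite eqxx oner_eq0.
  apply: (const0 (fun m => (m == k)%:R)) => X HX.
  rewrite /lform (bigD1 k) //= eqxx mul1r big1 ?addr0; last first.
    by move=> m /negbTE ->; rewrite mul0r.
  rewrite /qcoord; apply/eqP; rewrite pnatr_eq0; apply: contraT => Xk.
  by exfalso; apply: noR; exists X.
apply: NNPP => noRT.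
have kl_dep (X : pt n) : X \in tau -> (tnth R k * tnth X l = tnth R l * tnth X k)%N.
  by move=> HX; apply/eqP; apply: contraT => d; exfalso; apply: noRT; exists R, X.
pose g m := if m == k then qcoord R l else if m == l then - qcoord R k else 0.
have lk : l != k by rewrite eq_sym.
have gl : g l = 0.
  apply: const0 => X HX.
  rewrite /lform (bigD1 k) // (bigD1 l) //= big1 ?addr0; last first.
    by move=> m /andP[mk ml]; rewrite /g (negbTE mk) (negbTE ml) mul0r.
  by rewrite /g eqxx (negbTE lk) eqxx /qcoord mulNr -!natrM kl_dep // addrN.
by move/eqP: gl; rewrite /g (negbTE lk) eqxx oppr_eq0 pnatr_eq0 (negbTE Rk).
Qed.

Lemma Bsimplex_on_apex n (J : {set 'I_n}) (S : {fset pt n}) :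
  Bsimplex_on J S -> exists2 m, m \in J & exists2 W, W \in S &
    tnth W m = 1%N /\ forall x, x \in S -> x != W -> tnth x m = 0%N.
Proof.
case=> m mJ [Hc Hv]; exists m => //.
set N := [fset x in S | tnth x m != 0%N].
have HNS : N `<=` S by apply/fsubsetP => x; rewrite !inE => /andP[].
have HZ : [fset x in S | tnth x m == 0%N] = S `\` N.
  by apply/fsetP => x; rewrite !inE; case: (tnth x m == 0%N); case: (x \in S).
rewrite HZ cardfsDS // in Hc.
have /cardfs1P [W HW] : #|` N| == 1%N.
  by apply/eqP; have := fsubset_leq_card HNS; lia.
have : W \in N by rewrite HW inE.
rewrite inE => /andP[HWS HW0]; exists W => //; split; first exact: Hv.
move=> x Hx HxW; apply/eqP; apply: contraNT HxW => Hx0.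
have : x \in N by rewrite inE; apply/andP.
by rewrite HW inE.
Qed.

Lemma Bsimplex_onI n (J : {set 'I_n}) (S : {fset pt n}) m W :
  m \in J -> W \in S -> tnth W m = 1%N ->
  (forall x, x \in S -> x != W -> tnth x m = 0%N) -> Bsimplex_on J S.
Proof.
move=> mJ HW W1 H0; exists m => //; split; last first.
  by move=> x Hx; case: (eqVneq x W) => [-> | xW]; rewrite ?W1 ?H0.
have -> : [fset x in S | tnth x m == 0%N] = S `\ W.
  apply/fsetP => x; rewrite !inE; case: (eqVneq x W) => [-> | xW] /=; first by rewrite W1 andbF.
  by case Hx: (x \in S) => //=; rewrite H0.
by rewrite [RHS](cardfsD1 W) HW.
Qed.

Definition onehot2 (u v : nat) : Prop := (u = 1 /\ v = 0)%N \/ (u = 0 /\ v = 1)%N.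

Definition onehot4 (u v w z : nat) : Prop :=
  (u = 1 /\ v = 0 /\ w = 0 /\ z = 0)%N \/ (u = 0 /\ v = 1 /\ w = 0 /\ z = 0)%N \/
  (u = 0 /\ v = 0 /\ w = 1 /\ z = 0)%N \/ (u = 0 /\ v = 0 /\ w = 0 /\ z = 1)%N.

Lemma Bsimplex_on_pair n (J : {set 'I_n}) (P Q : pt n) m :
  m \in J -> P != Q -> onehot2 (tnth P m) (tnth Q m) -> Bsimplex_on J [fset P; Q].
Proof.
move=> mJ PQ [[P1 Q0] | [P0 Q1]].
- apply: (Bsimplex_onI mJ _ P1); first by rewrite !inE eqxx.
  by move=> x; rewrite !inE => /orP[] /eqP -> //; rewrite eqxx.
- apply: (Bsimplex_onI mJ _ Q1); first by rewrite !inE eqxx orbT.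
  by move=> x; rewrite !inE => /orP[] /eqP -> //; rewrite eqxx.
Qed.

Lemma cardfs4 n (A B C D : pt n) :
  A != B -> A != C -> A != D -> B != C -> B != D -> C != D ->
  #|` A |` (B |` (C |` [fset D]))| = 4%N.
Proof.
move=> nAB nAC nAD nBC nBD nCD.
by rewrite !cardfsU1 cardfs1 !inE !negb_or nAB nAC nAD nBC nBD nCD.
Qed.

Lemma Bsimplex4_onehot4 n (A B C D : pt n) :
  A != B -> A != C -> A != D -> B != C -> B != D -> C != D ->
  Bsimplex (A |` (B |` (C |` [fset D]))) ->
  exists m, onehot4 (tnth A m) (tnth B m) (tnth C m) (tnth D m).
Proof.
move=> nAB nAC nAD nBC nBD nCD /Bsimplex_on_apex [m _ [W HW [W1 H0]]]; exists m.
have mem x : x \in [:: A; B; C; D] -> x \in A |` (B |` (C |` [fset D])).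
  by rewrite !inE.
move: HW; rewrite !inE => /or4P[] /eqP EW; subst W; rewrite /onehot4 W1.
- by left; rewrite !H0 ?mem ?inE ?eqxx ?orbT // eq_sym.
- by right; left; rewrite !H0 ?mem ?inE ?eqxx ?orbT // eq_sym.
- by right; right; left; rewrite !H0 ?mem ?inE ?eqxx ?orbT // eq_sym.
- by right; right; right; rewrite !H0 ?mem ?inE ?eqxx ?orbT // eq_sym.
Qed.

Lemma fset_card2 (K : choiceType) (S : {fset K}) :
  #|` S| = 2%N -> exists P Q : K, P != Q /\ S = [fset P; Q].
Proof.
move=> cardS; have : S != fset0 by apply/eqP => S0; rewrite S0 cardfs0 in cardS.
case/fset0Pn => P HP.
have /cardfs1P [Q SPQ] : #|` S `\ P| == 1%N.
  by apply/eqP; have := cardfsD1 P S; rewrite HP cardS /=; lia.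
exists P, Q; split; last by rewrite -(fsetD1K HP) SPQ.
have : Q \in S `\ P by rewrite SPQ inE.
by rewrite in_fsetD1 eq_sym => /andP[].
Qed.

Lemma not_Bface_edge n (F : {fset pt n}) (J : {set 'I_n}) :
  adim F = 1%N -> ~ Bface_wrt F J ->
  exists P Q : pt n, [/\ P \in F, Q \in F, P != Q & ~ Bsimplex_on J [fset P; Q]].
Proof.
move=> dimF nB; apply: NNPP => noPQ; apply: nB => S SF; rewrite dimF => -[cardS _].
have [P [Q [nPQ defS]]] := fset_card2 cardS; rewrite defS in SF *.
apply: NNPP => nBS; apply: noPQ; exists P, Q.
by split => //; apply: (fsubsetP SF); rewrite !inE eqxx ?orbT.
Qed.

Section SameKL.

Variables (a : 'I_4 -> rat) (i j k l : 'I_4).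
Hypothesis ijkl : uniq [:: i; j; k; l].
Hypotheses (ai_pos : 0 < a i) (aj_pos : 0 < a j).
Variables X Y : pt 4.
Hypothesis eq_aXY : lform a X = lform a Y.
Hypotheses (XYk : tnth X k = tnth Y k) (XYl : tnth X l = tnth Y l).

Lemma lform_same_kl :
  a i * (qcoord X i - qcoord Y i) = a j * (qcoord Y j - qcoord X j).
Proof.
transitivity (lform a X - lform a Y + a j * (qcoord Y j - qcoord X j)).
  by rewrite !(lform4 a _ ijkl) /qcoord XYk XYl; ring.
by rewrite eq_aXY subrr add0r.
Qed.

Lemma same_kl_neq : X != Y -> tnth X i <> tnth Y i /\ tnth X j <> tnth Y j.
Proof.
move=> nXY; have E := lform_same_kl.
split => e; move/eqP: nXY; apply; apply: (eq_pt4 ijkl) => //.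
- have qi : qcoord X i = qcoord Y i by rewrite /qcoord e.
  move: E; rewrite qi subrr mulr0 => /esym/eqP.
  by rewrite mulf_eq0 gt_eqF //= subr_eq0 => /eqP/esym/qcoord_inj.
- have qj : qcoord X j = qcoord Y j by rewrite /qcoord e.
  move: E; rewrite qj subrr mulr0 => /eqP.
  by rewrite mulf_eq0 gt_eqF //= subr_eq0 => /eqP/qcoord_inj.
Qed.

Lemma same_kl_ltn : (tnth X i < tnth Y i)%N -> (tnth Y j < tnth X j)%N.
Proof.
rewrite -!(ltr_nat rat) => lt_i.
have : a j * (qcoord Y j - qcoord X j) < 0 by rewrite -lform_same_kl pmulr_rlt0 // subr_lt0.
by rewrite pmulr_rlt0 // subr_lt0.
Qed.

End SameKL.

Lemma linear2_eq0 (u1 u2 v1 v2 x y : rat) : u1 * x + u2 * y = 0 -> v1 * x + v2 * y = 0 ->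
  u1 * v2 - u2 * v1 != 0 -> x = 0 /\ y = 0.
Proof.
move=> H1 H2 Hd.
have Hx : x * (u1 * v2 - u2 * v1) = v2 * (u1 * x + u2 * y) - u2 * (v1 * x + v2 * y) by ring.
have Hy : y * (u1 * v2 - u2 * v1) = u1 * (v1 * x + v2 * y) - v1 * (u1 * x + u2 * y) by ring.
move: Hx Hy; rewrite H1 H2 !mulr0 subrr => /eqP + /eqP.
by rewrite !mulf_eq0 (negbTE Hd) !orbF => /eqP -> /eqP ->.
Qed.

(* Y, Y' differ only in the coordinates i, j, and the (k, l)-parts of X - Y and
   Z - Y are independent, so Y, Y', X, Z span the hyperplane: they form a 3-simplex. *)
Lemma Bfacet_quadruple_onehot4 (tau : {fset pt 4}) a b (i j k l : 'I_4) :
  uniq [:: i; j; k; l] -> (forall m, 0 < a m) ->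
  (forall X, X \in tau -> lform a X = b) ->
  (forall S : {fset pt 4}, S `<=` tau -> simplex 3 S -> Bsimplex S) ->
  forall Y Y' X Z : pt 4, Y \in tau -> Y' \in tau -> X \in tau -> Z \in tau ->
  Y != Y' -> tnth Y k = tnth Y' k -> tnth Y l = tnth Y' l ->
  (qcoord X k - qcoord Y k) * (qcoord Z l - qcoord Y l) !=
    (qcoord X l - qcoord Y l) * (qcoord Z k - qcoord Y k) ->
  exists m, onehot4 (tnth Y m) (tnth Y' m) (tnth X m) (tnth Z m).
Proof.
move=> U a_pos Hh HB Y Y' X Z HY HY' HX HZ nYY' Hk Hl Hd.
have qk : qcoord Y k = qcoord Y' k by rewrite /qcoord Hk.
have ql : qcoord Y l = qcoord Y' l by rewrite /qcoord Hl.
have nXY : X != Y by apply: contraNneq Hd => ->; rewrite !subrr !mul0r.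
have nXY' : X != Y' by apply: contraNneq Hd => ->; rewrite -qk -ql !subrr !mul0r.
have nZY : Z != Y by apply: contraNneq Hd => ->; rewrite !subrr !mulr0.
have nZY' : Z != Y' by apply: contraNneq Hd => ->; rewrite -qk -ql !subrr !mulr0.
have nXZ : X != Z by apply: contraNneq Hd => ->; rewrite mulrC.
set S := Y |` (Y' |` (X |` [fset Z])).
have Stau x : x \in S -> x \in tau by rewrite !inE => /or4P[] /eqP ->.
have cardS : #|` S| = 4%N by rewrite cardfs4 // eq_sym.
apply: Bsimplex4_onehot4 => //; try by rewrite eq_sym.
apply: HB; first exact/fsubsetP.
split => //; apply: (@adim_hyperplane 3 S a b i); first by rewrite gt_eqF.
- by rewrite cardS.
- by move=> x /Stau; apply: Hh.
move=> g Hg; set c := g i / a i; pose h m := g m - c * a m.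
have hi : h i = 0 by rewrite /h /c mulfVK ?subrr // gt_eqF.
have hconst x : x \in S -> lform h x = lform h Y.
  move=> Sx; rewrite !lformB (Hh _ (Stau _ Sx)) (Hh _ HY) (Hg x Y) //.
  by rewrite !inE eqxx.
have [_ nYj] := same_kl_neq U (a_pos i) (a_pos j)
  (etrans (Hh _ HY) (esym (Hh _ HY'))) Hk Hl nYY'.
have hj : h j = 0.
  have : h j * (qcoord Y j - qcoord Y' j) = lform h Y - lform h Y'.
    by rewrite !(lform4 h _ U) hi -qk -ql; ring.
  rewrite hconst ?subrr; last by rewrite !inE eqxx orbT.
  move/eqP; rewrite mulf_eq0 => /orP[/eqP // | ].
  by rewrite subr_eq0 => /eqP/qcoord_inj.
have [hk hl] : h k = 0 /\ h l = 0.
  apply: (@linear2_eq0 (qcoord X k - qcoord Y k) (qcoord X l - qcoord Y l)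
                       (qcoord Z k - qcoord Y k) (qcoord Z l - qcoord Y l)).
  - transitivity (lform h X - lform h Y); first by rewrite !(lform4 h _ U) hi hj; ring.
    by rewrite hconst ?subrr // !inE eqxx !orbT.
  - transitivity (lform h Z - lform h Y); first by rewrite !(lform4 h _ U) hi hj; ring.
    by rewrite hconst ?subrr // !inE eqxx !orbT.
  - by rewrite subr_eq0.
exists c => m; apply/eqP; rewrite -subr_eq0; apply/eqP.
by have := mem_uniq_ord4 m U; rewrite !inE => /or4P[] /eqP ->.
Qed.

Lemma qdet_kl_base0 (R T Y : pt 4) (k l : 'I_4) : tnth Y k = 0%N -> tnth Y l = 0%N ->
  (tnth R k * tnth T l != tnth R l * tnth T k)%N ->
  (qcoord R k - qcoord Y k) * (qcoord T l - qcoord Y l) !=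
    (qcoord R l - qcoord Y l) * (qcoord T k - qcoord Y k).
Proof.
move=> Yk Yl; apply: contra => /eqP E; rewrite -(eqr_nat rat) !natrM.
by rewrite /qcoord Yk Yl !subr0 in E; rewrite E.
Qed.

Lemma qdet_kl_apex0 (X Y Z : pt 4) (k l : 'I_4) : tnth Z k = 0%N -> tnth Z l = 0%N ->
  (tnth X l * tnth Y k != tnth X k * tnth Y l)%N ->
  (qcoord X k - qcoord Y k) * (qcoord Z l - qcoord Y l) !=
    (qcoord X l - qcoord Y l) * (qcoord Z k - qcoord Y k).
Proof.
move=> Zk Zl; apply: contra => /eqP E; rewrite -(eqr_nat rat) !natrM.
by apply/eqP; rewrite /qcoord Zk Zl in E; nra.
Qed.

Lemma B1facetI (tau : {fset pt 4}) (m : 'I_4) (Y : pt 4) : Y \in tau -> tnth Y m = 1%N ->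
  (forall x, x \in tau -> tnth x m <> 0%N -> x = Y) -> B1facet tau.
Proof.
move=> HY Y1 Hu; exists m; split.
  have -> : [fset x in tau | tnth x m != 0%N] = [fset Y].
    apply/fsetP => x; rewrite inE /= !inE; apply/andP/eqP.
      by case=> Hx /eqP Hx0; apply: Hu.
    by move=> ->; rewrite HY Y1.
  by rewrite cardfs1.
by move=> x Hx /eqP Hx0; rewrite (Hu x Hx Hx0).
Qed.

Lemma flat_borderI (tau : {fset pt 4}) (m1 m2 : 'I_4) (C X1 X2 : pt 4) : m1 != m2 ->
  C \in tau -> tnth C m1 = 1%N -> tnth C m2 = 1%N ->
  X1 \in tau -> X2 \in tau -> X1 != X2 ->
  tnth X1 m1 = 0%N -> tnth X1 m2 = 0%N -> tnth X2 m1 = 0%N -> tnth X2 m2 = 0%N ->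
  (forall x, x \in tau -> x != C -> tnth x m1 = 0%N \/ tnth x m2 = 0%N) ->
  flat_border tau.
Proof.
move=> m12 HC C1 C2 H1 H2 d12 a1 a2 b1 b2 Hall.
exists m1, m2, C; do 4!(split => //); split; last exact: Hall.
apply: (leq_trans (n := #|` [fset X1; X2]|)); first by rewrite cardfs2 d12.
apply: fsubset_leq_card; apply/fsubsetP => x; rewrite !inE => /orP[] /eqP ->.
  by rewrite /= ?inE H1 a1 a2.
by rewrite /= ?inE H2 b1 b2.
Qed.

(* The standing hypotheses of the case analysis; P, Q is a non-B edge of the V-face,
   whose plane is spanned by the coordinates i, j. *)
Record edge_config (tau : {fset pt 4}) (a : 'I_4 -> rat) (b : rat)
    (i j k l : 'I_4) (P Q : pt 4) : Prop := {
  edge_uniq : uniq [:: i; j; k; l];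
  edge_pos : forall m, 0 < a m;
  edge_hyp : forall X, X \in tau -> lform a X = b;
  edge_quad : forall Y Y' X Z : pt 4, Y \in tau -> Y' \in tau -> X \in tau -> Z \in tau ->
    Y != Y' -> tnth Y k = tnth Y' k -> tnth Y l = tnth Y' l ->
    (qcoord X k - qcoord Y k) * (qcoord Z l - qcoord Y l) !=
      (qcoord X l - qcoord Y l) * (qcoord Z k - qcoord Y k) ->
    exists m, onehot4 (tnth Y m) (tnth Y' m) (tnth X m) (tnth Z m);
  edge_rank : exists R T : pt 4,
    [/\ R \in tau, T \in tau & (tnth R k * tnth T l != tnth R l * tnth T k)%N];
  edge_P : P \in tau;
  edge_Q : Q \in tau;
  edge_PQ : P != Q;
  edge_Pk : tnth P k = 0%N;
  edge_Pl : tnth P l = 0%N;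
  edge_Qk : tnth Q k = 0%N;
  edge_Ql : tnth Q l = 0%N;
  edge_notBi : ~ onehot2 (tnth P i) (tnth Q i);
  edge_notBj : ~ onehot2 (tnth P j) (tnth Q j)
}.

Section EdgeConfig.

Variables (tau : {fset pt 4}) (a : 'I_4 -> rat) (b : rat) (i j k l : 'I_4) (P Q : pt 4).

Lemma edge_config_swap :
  edge_config tau a b i j k l P Q -> edge_config tau a b i j l k P Q.
Proof.
case=> U pos hyp quad [R [T [HR HT Hd]]] HP HQ HPQ Pk Pl Qk Ql nBi nBj; split => //.
- move: U; rewrite /= !inE !negb_or => /and4P[/and3P[-> -> ->] /andP[-> ->]].
  by rewrite eq_sym => ->.
- move=> Y Y' X Z HY HY' HX HZ nYY' Hl Hk Hd'; apply: quad => //.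
  by rewrite eq_sym.
- by exists R, T; split => //; rewrite eq_sym.
Qed.

Hypothesis H : edge_config tau a b i j k l P Q.

Lemma edge_lform_eq (Y Y' : pt 4) : Y \in tau -> Y' \in tau -> lform a Y = lform a Y'.
Proof. by move=> HY HY'; rewrite !(edge_hyp H). Qed.

Lemma edge_ij_neq : tnth P i <> tnth Q i /\ tnth P j <> tnth Q j.
Proof.
apply: (same_kl_neq (edge_uniq H) (edge_pos H i) (edge_pos H j)).
- exact: edge_lform_eq (edge_P H) (edge_Q H).
- by rewrite (edge_Pk H) (edge_Qk H).
- by rewrite (edge_Pl H) (edge_Ql H).
- exact: edge_PQ H.
Qed.

(* B-simplex {P, Q, R, T}: P_m <> Q_m rules out m = i, j since {P, Q} is not B there. *)
Lemma edge_kl_onehot2 (R T : pt 4) : R \in tau -> T \in tau ->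
  (tnth R k * tnth T l != tnth R l * tnth T k)%N ->
  onehot2 (tnth R k) (tnth T k) \/ onehot2 (tnth R l) (tnth T l).
Proof.
move=> HR HT Hd; have [nPQi nPQj] := edge_ij_neq.
have [m] := edge_quad H (edge_P H) (edge_Q H) HR HT (edge_PQ H)
  (etrans (edge_Pk H) (esym (edge_Qk H))) (etrans (edge_Pl H) (esym (edge_Ql H)))
  (qdet_kl_base0 (edge_Pk H) (edge_Pl H) Hd).
have := mem_uniq_ord4 m (edge_uniq H); rewrite !inE => /or4P[] /eqP -> Hm.
- by case: (edge_notBi H); move: Hm nPQi; rewrite /onehot4 /onehot2; lia.
- by case: (edge_notBj H); move: Hm nPQj; rewrite /onehot4 /onehot2; lia.
- by move: Hm; rewrite (edge_Pk H) (edge_Qk H) /onehot4 /onehot2; lia.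
- by move: Hm; rewrite (edge_Pl H) (edge_Ql H) /onehot4 /onehot2; lia.
Qed.

Lemma edge_k_unit (X0 : pt 4) : X0 \in tau -> tnth X0 k = 0%N -> tnth X0 l <> 0%N ->
  forall Y : pt 4, Y \in tau -> tnth Y k <> 0%N -> tnth Y l <> 0%N -> tnth Y k = 1%N.
Proof.
move=> HX X0k X0l Y HY Yk Yl.
have Hd : (tnth X0 k * tnth Y l != tnth X0 l * tnth Y k)%N.
  by rewrite X0k mul0n eq_sym muln_eq0; apply/norP; split; apply/eqP.
by have := edge_kl_onehot2 HX HY Hd; rewrite /onehot2; lia.
Qed.

Lemma edge_exchange_side (Y Y' X Z : pt 4) :
  Y \in tau -> Y' \in tau -> X \in tau -> Z \in tau -> Y != Y' ->
  tnth Y k = tnth Y' k -> tnth Y l = tnth Y' l -> tnth Z k = 0%N -> tnth Z l = 0%N ->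
  (tnth X l * tnth Y k != tnth X k * tnth Y l)%N -> tnth Y k <> 0%N ->
  (tnth Y l <> 0%N \/ tnth X l <> 1%N) ->
  (tnth X i = 0 /\ tnth Z i = 0 /\ onehot2 (tnth Y i) (tnth Y' i))%N \/
  (tnth X j = 0 /\ tnth Z j = 0 /\ onehot2 (tnth Y j) (tnth Y' j))%N.
Proof.
move=> HY HY' HX HZ nYY' Hk Hl Zk Zl Hd Yk0 Yl0.
have [ni nj] := same_kl_neq (edge_uniq H) (edge_pos H i) (edge_pos H j)
  (edge_lform_eq HY HY') Hk Hl nYY'.
have [m] := edge_quad H HY HY' HX HZ nYY' Hk Hl (qdet_kl_apex0 Zk Zl Hd).
have := mem_uniq_ord4 m (edge_uniq H); rewrite !inE /onehot4 /onehot2.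
by case/or4P => /eqP -> Hm; [left | right | exfalso | exfalso]; lia.
Qed.

Lemma edge_exchange (Y Y' X : pt 4) :
  Y \in tau -> Y' \in tau -> X \in tau -> Y != Y' ->
  tnth Y k = tnth Y' k -> tnth Y l = tnth Y' l ->
  (tnth X l * tnth Y k != tnth X k * tnth Y l)%N -> tnth Y k <> 0%N ->
  (tnth Y l <> 0%N \/ tnth X l <> 1%N) ->
  [/\ tnth X i = 0%N, tnth X j = 0%N,
    (tnth Y i = 1 /\ tnth Y j = 0 /\ tnth Y' i = 0 /\ tnth Y' j = 1)%N \/
    (tnth Y i = 0 /\ tnth Y j = 1 /\ tnth Y' i = 1 /\ tnth Y' j = 0)%N &
    (tnth P i = 0 /\ tnth Q j = 0)%N \/ (tnth P j = 0 /\ tnth Q i = 0)%N].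
Proof.
move=> HY HY' HX nYY' Hk Hl Hd Yk0 Yl0.
have U := edge_uniq H; have ai := edge_pos H i; have aj := edge_pos H j.
have E := edge_lform_eq HY HY'.
have lt_ij := same_kl_ltn U ai aj E Hk Hl.
have lt_ji := same_kl_ltn U ai aj (esym E) (esym Hk) (esym Hl).
have [nPQi nPQj] := edge_ij_neq.
case: (edge_exchange_side HY HY' HX (edge_P H) nYY' Hk Hl (edge_Pk H) (edge_Pl H) Hd Yk0 Yl0)
  => [[XiP [Pi oiP]] | [XjP [Pj ojP]]];
case: (edge_exchange_side HY HY' HX (edge_Q H) nYY' Hk Hl (edge_Qk H) (edge_Ql H) Hd Yk0 Yl0)
  => [[XiQ [Qi oiQ]] | [XjQ [Qj ojQ]]];
  try by [case: nPQi; rewrite Pi Qi | case: nPQj; rewrite Pj Qj].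
- by split => //; [move: oiP ojQ; rewrite /onehot2; lia | left].
- by split => //; [move: oiQ ojP; rewrite /onehot2; lia | right].
Qed.

Lemma edge_flat_border (C X1 : pt 4) (m : 'I_4) :
  (m = i \/ m = j) -> C \in tau -> tnth C m = 1%N -> tnth C k = 1%N ->
  X1 \in tau -> tnth X1 i = 0%N -> tnth X1 j = 0%N -> tnth X1 k = 0%N -> tnth X1 l <> 0%N ->
  (tnth P i = 0 /\ tnth Q j = 0)%N \/ (tnth P j = 0 /\ tnth Q i = 0)%N ->
  (forall x : pt 4, x \in tau -> x != C -> tnth x k <> 0%N -> tnth x m = 0%N) ->
  flat_border tau.
Proof.
move=> Hm HC Cm Ck HX1 X1i X1j X1k X1l PQ0 Hx.
have [_ [ik [_ [jk _]]]] := uniq_ord4P (edge_uniq H).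
have mk : m != k by case: Hm => ->.
have [Z [HZ Zm Zk nXZ]] :
    exists Z : pt 4, [/\ Z \in tau, tnth Z m = 0%N, tnth Z k = 0%N & X1 != Z].
  have nXP : X1 != P by apply/eqP => E; apply: X1l; rewrite E (edge_Pl H).
  have nXQ : X1 != Q by apply/eqP => E; apply: X1l; rewrite E (edge_Ql H).
  have := edge_P H; have := edge_Q H; have := edge_Pk H; have := edge_Qk H.
  by case: Hm PQ0 => -> [[P0 Q0] | [P0 Q0]]; [exists P | exists Q | exists Q | exists P].
apply: (flat_borderI mk HC Cm Ck HX1 HZ nXZ) => //; first by case: Hm => ->.
move=> x Hx' nxC; case: (eqVneq (tnth x k) 0%N) => [-> | xk]; first by right.
by left; apply: Hx => //; apply/eqP.
Qed.

Lemma edge_exchange_flat_border (C C' X : pt 4) :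
  C \in tau -> C' \in tau -> X \in tau -> C != C' -> tnth C k = 1%N ->
  (forall x : pt 4, x \in tau -> tnth x k <> 0%N -> tnth x k = 1%N /\ tnth x l = tnth C l) ->
  tnth C' k <> 0%N -> tnth X k = 0%N -> tnth X l <> 0%N ->
  (tnth C l <> 0%N \/ tnth X l <> 1%N) -> flat_border tau.
Proof.
move=> HC HC' HX nCC' Ck1 kl_C C'k Xk Xl CXl.
have same (x : pt 4) : x \in tau -> tnth x k <> 0%N -> tnth C k = tnth x k /\ tnth C l = tnth x l.
  by move=> Hx xk; have [-> ->] := kl_C x Hx xk.
have Hd : (tnth X l * tnth C k != tnth X k * tnth C l)%N.
  by rewrite Ck1 Xk muln1 mul0n; apply/eqP.
have C0 : tnth C k <> 0%N by rewrite Ck1.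
have [Ck' Cl'] := same C' HC' C'k.
have [Xi Xj CC' PQ0] := edge_exchange HC HC' HX nCC' Ck' Cl' Hd C0 CXl.
suff flat m : m = i \/ m = j -> tnth C m = 1%N -> flat_border tau.
  by case: CC' => [[Ci _] | [_ [Cj _]]]; [apply: (flat i) | apply: (flat j)]; auto.
move=> Hm Cm; apply: (edge_flat_border Hm HC Cm Ck1 HX Xi Xj Xk Xl PQ0).
move=> x Hx nxC xk; have [Ckx Clx] := same x Hx xk.
have nCx : C != x by rewrite eq_sym.
have [_ _ Cx _] := edge_exchange HC Hx HX nCx Ckx Clx Hd C0 CXl.
by case: Hm Cm => -> Cm; lia.
Qed.

End EdgeConfig.

Section EdgeCases.

Variables (tau : {fset pt 4}) (a : 'I_4 -> rat) (b : rat) (i j k l : 'I_4) (P Q : pt 4).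
Hypothesis H : edge_config tau a b i j k l P Q.

(* A second such point Y' would give an edge Y Y' exchanging i and j, which the
   hyperplane equation forbids: it would weigh Z0 = e_k against e_k + e_l + e_i (or e_j). *)
Lemma edge_kl_point_flat_border (X0 Z0 Y : pt 4) :
  X0 \in tau -> tnth X0 k = 0%N -> tnth X0 l <> 0%N ->
  Z0 \in tau -> tnth Z0 l = 0%N -> tnth Z0 k = 1%N ->
  Y \in tau -> tnth Y k <> 0%N -> tnth Y l <> 0%N -> flat_border tau.
Proof.
move=> HX0 X0k X0l HZ0 Z0l Z0k HY Yk Yl.
have Z0k' : tnth Z0 k <> 0%N by rewrite Z0k.
have kl1 (x : pt 4) : x \in tau -> tnth x k <> 0%N -> tnth x l <> 0%N ->
    tnth x k = 1%N /\ tnth x l = 1%N.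
  move=> Hx xk xl; split; first exact: (edge_k_unit H HX0 X0k X0l Hx).
  exact: (edge_k_unit (edge_config_swap H) HZ0 Z0l Z0k' Hx).
have [Yk1 Yl1] := kl1 Y HY Yk Yl.
have [_ [_ [_ [_ [_ kl]]]]] := uniq_ord4P (edge_uniq H).
apply: (flat_borderI kl HY Yk1 Yl1 (edge_P H) (edge_Q H) (edge_PQ H));
  [exact: edge_Pk H | exact: edge_Pl H | exact: edge_Qk H | exact: edge_Ql H | ].
move=> Y' HY' nY'Y; apply: NNPP => /not_or_and[Y'k Y'l].
have [Y'k1 Y'l1] := kl1 Y' HY' Y'k Y'l.
have Hd : (tnth Z0 l * tnth Y k != tnth Z0 k * tnth Y l)%N by rewrite Z0l Z0k Yl1.
have nYY' : Y != Y' by rewrite eq_sym.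
have [Z0i Z0j YY' _] := edge_exchange H HY HY' HZ0 nYY'
  (etrans Yk1 (esym Y'k1)) (etrans Yl1 (esym Y'l1)) Hd Yk (or_introl Yl).
have hZ0 := edge_hyp H HZ0; have hY := edge_hyp H HY.
rewrite !(lform4 a _ (edge_uniq H)) /qcoord Z0i Z0j Z0k Z0l Yk1 Yl1 in hZ0 hY.
have := edge_pos H i; have := edge_pos H j; have := edge_pos H l.
by case: YY' => [[-> [-> _]] | [-> [-> _]]] in hY *; lra.
Qed.

Lemma edge_cases_k_unit (X0 Z0 : pt 4) :
  X0 \in tau -> tnth X0 k = 0%N -> tnth X0 l <> 0%N ->
  Z0 \in tau -> tnth Z0 l = 0%N -> tnth Z0 k <> 0%N ->
  (forall Z : pt 4, Z \in tau -> tnth Z l = 0%N -> tnth Z k <> 0%N -> tnth Z k = 1%N) ->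
  B1facet tau \/ B2facet tau \/ flat_border tau.
Proof.
move=> HX0 X0k X0l HZ0 Z0l Z0k k_unit.
have Z0k1 := k_unit Z0 HZ0 Z0l Z0k.
case: (classic (exists Y : pt 4, [/\ Y \in tau, tnth Y k <> 0%N & tnth Y l <> 0%N])).
  case=> Y [HY Yk Yl]; right; right.
  exact: (edge_kl_point_flat_border HX0 X0k X0l HZ0 Z0l Z0k1 HY).
move=> noY; have k_axis (x : pt 4) : x \in tau -> tnth x k <> 0%N -> tnth x l = 0%N.
  by move=> Hx xk; apply: NNPP => xl; apply: noY; exists x.
case: (classic (exists Z1 : pt 4, [/\ Z1 \in tau, Z1 != Z0, tnth Z1 l = 0%N & tnth Z1 k <> 0%N]));
  last first.
  move=> noZ1; left; apply: (B1facetI HZ0 Z0k1) => x Hx xk.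
  by apply: NNPP => nxZ0; apply: noZ1; exists x; split => //; [apply/eqP | apply: k_axis].
case=> Z1 [HZ1 nZ1Z0 Z1l Z1k]; right.
case: (classic (exists X1 : pt 4, [/\ X1 \in tau, tnth X1 k = 0%N & (1 < tnth X1 l)%N])).
  case=> X1 [HX1 X1k X1l]; right.
  have nZ0Z1 : Z0 != Z1 by rewrite eq_sym.
  apply: (edge_exchange_flat_border H HZ0 HZ1 HX1 nZ0Z1 Z0k1 _ Z1k X1k); [ | lia | right; lia].
  by move=> x Hx xk; have xl := k_axis x Hx xk; rewrite xl Z0l k_unit.
move=> noX1; left; exists k, l.
split; first by have [_ [_ [_ [_ [_ ->]]]]] := uniq_ord4P (edge_uniq H).
move=> x Hx; case: (eqVneq (tnth x k) 0%N) => [xk | /eqP xk].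
  have : ~ (1 < tnth x l)%N by move=> xl; apply: noX1; exists x.
  by rewrite xk !inE; case: (tnth x l) => [|[|]] //=; lia.
by rewrite (k_axis x Hx xk) (k_unit x Hx (k_axis x Hx xk) xk) !inE.
Qed.

Lemma edge_cases_k_axis_empty (X0 : pt 4) :
  X0 \in tau -> tnth X0 k = 0%N -> tnth X0 l <> 0%N ->
  (forall Z : pt 4, Z \in tau -> tnth Z l = 0%N -> tnth Z k = 0%N) ->
  B1facet tau \/ B2facet tau \/ flat_border tau.
Proof.
move=> HX0 X0k X0l no_k_axis.
have kl (x : pt 4) : x \in tau -> tnth x k <> 0%N -> tnth x l <> 0%N.
  by move=> Hx xk xl; apply/xk/no_k_axis.
have k1 (x : pt 4) : x \in tau -> tnth x k <> 0%N -> tnth x k = 1%N.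
  by move=> Hx xk; apply: (edge_k_unit H HX0 X0k X0l Hx xk (kl x Hx xk)).
have [Y [HY Yk]] : exists Y : pt 4, Y \in tau /\ tnth Y k <> 0%N.
  apply: NNPP => noY; have [R [T [HR HT]]] := edge_rank H.
  have k0 (x : pt 4) : x \in tau -> tnth x k = 0%N.
    by move=> Hx; apply: NNPP => xk; apply: noY; exists x.
  by rewrite (k0 R HR) (k0 T HT) muln0 mul0n.
have Yk1 := k1 Y HY Yk.
have same (x : pt 4) : x \in tau -> tnth x k <> 0%N -> tnth x k = 1%N /\ tnth x l = tnth Y l.
  move=> Hx xk; split; first exact: k1.
  apply: NNPP => nxl; have Hd : (tnth Y k * tnth x l != tnth Y l * tnth x k)%N.
    by rewrite Yk1 k1 // mul1n muln1; apply/eqP.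
  have := edge_kl_onehot2 H HY Hx Hd; have := kl x Hx xk; have := kl Y HY Yk.
  by rewrite /onehot2 Yk1 k1 //; lia.
case: (classic (exists Y' : pt 4, [/\ Y' \in tau, Y' != Y & tnth Y' k <> 0%N])).
  case=> Y' [HY' nY'Y Y'k]; right; right.
  apply: (edge_exchange_flat_border H HY HY' HX0 _ Yk1 same Y'k X0k X0l); last by left; apply: kl.
  by rewrite eq_sym.
move=> noY'; left; apply: (B1facetI HY Yk1) => x Hx xk.
by apply: NNPP => nxY; apply: noY'; exists x; split => //; apply/eqP.
Qed.

End EdgeCases.

Lemma edge_cases_l_point tau a b i j k l P Q (X0 : pt 4) :
  edge_config tau a b i j k l P Q ->
  X0 \in tau -> tnth X0 k = 0%N -> tnth X0 l <> 0%N ->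
  B1facet tau \/ B2facet tau \/ flat_border tau.
Proof.
move=> H HX0 X0k X0l.
case: (classic (exists Z0 : pt 4, [/\ Z0 \in tau, tnth Z0 l = 0%N & tnth Z0 k <> 0%N]));
  last first.
  move=> noZ0; apply: (edge_cases_k_axis_empty H HX0 X0k X0l) => Z HZ Zl.
  by apply: NNPP => Zk; apply: noZ0; exists Z.
case=> Z0 [HZ0 Z0l Z0k].
case: (classic (exists Z1 : pt 4, [/\ Z1 \in tau, tnth Z1 l = 0%N & (1 < tnth Z1 k)%N])).
  case=> Z1 [HZ1 Z1l Z1k].
  apply: (edge_cases_k_unit (edge_config_swap H) HZ0 Z0l Z0k HX0 X0k X0l) => X HX Xk Xl.
  have Hd : (tnth X k * tnth Z1 l != tnth X l * tnth Z1 k)%N.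
    by rewrite Xk Z1l mul0n eq_sym muln_eq0; apply/norP; split; apply/eqP => //; lia.
  by have := edge_kl_onehot2 H HX HZ1 Hd; rewrite /onehot2; lia.
move=> noZ1; apply: (edge_cases_k_unit H HX0 X0k X0l HZ0 Z0l Z0k) => Z HZ Zl Zk.
by apply: NNPP => Zk1; apply: noZ1; exists Z; split => //; lia.
Qed.

(* Two points with independent (k, l)-parts are B in k or l; whichever of them
   vanishes there plays the role of X0 (for k and l possibly swapped). *)
Lemma edge_config_cases tau a b i j k l P Q :
  edge_config tau a b i j k l P Q -> B1facet tau \/ B2facet tau \/ flat_border tau.
Proof.
move=> H; have [R [T [HR HT Hd]]] := edge_rank H.
have H' := edge_config_swap H.
case: (edge_kl_onehot2 H HR HT Hd) => -[[e1 e2] | [e1 e2]].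
- by apply: (edge_cases_l_point H HT e2) => Tl; move: Hd; rewrite e1 e2 Tl ?muln0 ?mul0n.
- by apply: (edge_cases_l_point H HR e1) => Rl; move: Hd; rewrite e1 e2 Rl ?muln0 ?mul0n.
- by apply: (edge_cases_l_point H' HT e2) => Tk; move: Hd; rewrite e1 e2 Tk ?muln0 ?mul0n.
- by apply: (edge_cases_l_point H' HR e1) => Rk; move: Hd; rewrite e1 e2 Rk ?muln0 ?mul0n.
Qed.

Theorem lemma2p8 (tau : {fset pt 4}) :
  Bfacet tau ->
  (exists (F : {fset pt 4}) (J : {set 'I_4}),
      Vface_wrt tau F J /\ adim F = 1%N /\ ~ Bface_wrt F J) ->
  B1facet tau \/ B2facet tau \/ flat_border tau.
Proof.
move=> [[a [b [a_pos aff]]] HB] [F [J [[[c [e [_ defF]]] [FJ cardJ]] [dimF nBF]]]].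
have Ftau : F `<=` tau by rewrite defF; apply/fsubsetP => x; rewrite inE => /andP[].
have [P [Q [PF QF nPQ nBPQ]]] := not_Bface_edge dimF nBF.
have /cards2P [i [j [nij defJ]]] : #|J| == 2%N by rewrite cardJ dimF.
have [k [l U]] := uniq_ord4_complete nij.
have [_ [ik [il [jk [jl kl]]]]] := uniq_ord4P U.
have kJ : k \notin J by rewrite defJ !inE negb_or ![k == _]eq_sym ik jk.
have lJ : l \notin J by rewrite defJ !inE negb_or ![l == _]eq_sym il jl.
have Hh := hyperplane_mem aff.
have [HP HQ] := (fsubsetP Ftau P PF, fsubsetP Ftau Q QF).
apply: (@edge_config_cases tau a b i j k l P Q); split => //; try exact: FJ.
- exact: (Bfacet_quadruple_onehot4 U a_pos Hh HB).
- exact: (hyperplane_kl_independent a_pos aff (hyperplane_rhs_neq0 a_pos (Hh _ HP) (Hh _ HQ) nPQ)).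
- by move=> oh; apply/nBPQ/(Bsimplex_on_pair _ nPQ oh); rewrite defJ !inE eqxx.
- by move=> oh; apply/nBPQ/(Bsimplex_on_pair _ nPQ oh); rewrite defJ !inE eqxx orbT.
Qed.
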